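(* Let $K\ge1$, let $P^0,P^1,\ldots,P^K$ be real polynomials and $c_1,\ldots,c_K$ real constants, and let \[ F(x)=P^0(x)+\sum_{j=1}^K P^j(x)\frac{1}{\sqrt{x+c_j}}, \] considered on the interval $(-\min_j c_j,\infty)$, and assume $F$ is not identically zero there. Then the number $\mathcal Z(F)$ of real zeros of $F$ in this interval, counted with multiplicity, satisfies \[ \mathcal Z(F)\le K\left(\max_{j=1,\ldots,K}\deg(P^j)+1\right)+\deg(P^0), \] with the convention $\deg(0)=-1$. *)

From HB Require Import structures.
From mathcomp Require Import all_boot all_order all_algebra.
From mathcomp Require Import all_classical all_reals all_analysis.
Set Implicit Arguments. Unset Strict Implicit. Unset Printing Implicit Defensive.
Import Order.TTheory GRing.Theory Num.Theory.
Local Open Scope ring_scope.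

Definition Fsqrt (R : realType) (K : nat) (P0 : {poly R})
  (P : 'I_K -> {poly R}) (c : 'I_K -> R) : R -> R :=
  fun x => P0.[x] + \sum_(j < K) (P j).[x] * (Num.sqrt (x + c j))^-1.

Definition in_dom (R : realType) (K : nat) (c : 'I_K -> R) (x : R) : Prop :=
  forall j : 'I_K, - c j < x.

Definition zero_mult_ge (R : realType) (F : R -> R) (x : R) (m : nat) : Prop :=
  forall i : nat, (i < m)%N -> derive1n i F x = 0.

(* Z(F) <= B on the domain D: for every finite set of distinct points of D,
   the sum of (lower bounds for) their zero multiplicities is at most B. *)
Definition zeros_with_mult_le (R : realType) (F : R -> R) (D : R -> Prop)
  (B : int) : Prop :=
  forall (s : seq R) (m : R -> nat), uniq s ->
    (forall x, x \in s -> D x /\ zero_mult_ge F x (m x)) ->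
    ((\sum_(x <- s) m x)%N)%:Z <= B.

From HB Require Import structures.
From mathcomp Require Import all_boot all_order all_algebra.
From mathcomp Require Import all_classical all_reals all_analysis.
From mathcomp Require Import ring lra zify.
Import Order.TTheory GRing.Theory Num.Theory.
Local Open Scope ring_scope.

(* Let F = P0 + sum_j P_j (x + c_j)^(-b) with size P_j <= S, for any real b.
   Differentiating F (size P0) times kills P0 and keeps the shape
   sum_j Q_j (x + c_j)^(-b-m) with size Q_j <= S. A sum G of K + 1 such terms
   is handled by induction on K: the operator g |-> (x + c_K)^2 g', applied
   S times to (x + c_K)^(b - S + 1) G, keeps the sizes of the first K
   polynomials, lowers that of the last one at each step until it vanishes,
   and leaves (x + c_K)^(b + 1) times a sum of K terms with exponent -(b + S).
   By Rolle's theorem a differentiation loses at most one zero (counted with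
   multiplicity), and multiplying by a smooth nonvanishing factor loses none;
   hence Z(G) < (K + 1) S and Z(F) < K S + size P0. Take b = 1/2. *)

Section SmoothOn.
Context {R : realType} {a : R}.

Definition smooth_on (f : R -> R) :=
  forall k x, a < x -> derivable (derive1n k f) x 1.

Lemma derive1_eq_on {f g : R -> R} {x : R} : a < x ->
  (forall y, a < y -> f y = g y) -> derive1 f x = derive1 g x.
Proof.
move=> ax fg; rewrite !derive1E; apply: near_eq_derive.
near=> y; apply: fg; near: y; exact: lt_nbhsr.
Unshelve. all: by end_near. Qed.

Lemma derivable_eq_on {f g : R -> R} {x : R} : a < x ->
  (forall y, a < y -> f y = g y) -> derivable f x 1 -> derivable g x 1.
Proof.
move=> ax fg; apply: near_eq_derivable.
near=> y; apply: fg; near: y; exact: lt_nbhsr.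
Unshelve. all: by end_near. Qed.

Lemma derive1n_eq_on {f g : R -> R} k {x : R} : a < x ->
  (forall y, a < y -> f y = g y) -> derive1n k f x = derive1n k g x.
Proof.
move=> + fg; elim: k x => [|k IHk] x ax; first exact: fg.
by rewrite !derive1nS; apply: derive1_eq_on => // y /IHk.
Qed.

Lemma smooth_on_eq {f g : R -> R} :
  (forall y, a < y -> f y = g y) -> smooth_on f -> smooth_on g.
Proof.
move=> fg sf k x ax; apply: (derivable_eq_on ax _ (sf k x ax)) => y ay.
exact: derive1n_eq_on.
Qed.

Lemma smooth_on_derivable {f : R -> R} {x : R} :
  smooth_on f -> a < x -> derivable f x 1.
Proof. by move=> sf; apply: (sf 0%N). Qed.

Lemma smooth_on_derive1 {f : R -> R} : smooth_on f -> smooth_on (derive1 f).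
Proof. by move=> sf k x ax; rewrite -derive1Sn; apply: sf. Qed.

Lemma derive1nD_on {f g : R -> R} {k : nat} {x : R} :
  (forall j y, (j < k)%N -> a < y -> derivable (derive1n j f) y 1) ->
  (forall j y, (j < k)%N -> a < y -> derivable (derive1n j g) y 1) ->
  a < x -> derive1n k (f \+ g) x = derive1n k f x + derive1n k g x.
Proof.
elim: k x => [//|k IHk] x df dg ax; rewrite !derive1nS.
rewrite (derive1_eq_on (g := derive1n k f \+ derive1n k g)) //; last first.
  by move=> y ay; apply: IHk => // j z /ltnW; [apply: df | apply: dg].
by rewrite derive1E deriveD -?derive1E //; [apply: df | apply: dg].
Qed.

Lemma smooth_onD {f g : R -> R} : smooth_on f -> smooth_on g -> smooth_on (f \+ g).
Proof.
move=> sf sg k x ax.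
apply: (derivable_eq_on (f := derive1n k f \+ derive1n k g)) => //.
  by move=> y ay; apply/esym/derive1nD_on => // j z _; [apply: sf | apply: sg].
exact: (derivableD (sf k x ax) (sg k x ax)).
Qed.

Lemma derive1M_on {f g : R -> R} {x : R} : smooth_on f -> smooth_on g -> a < x ->
  derive1 (f \* g) x = (derive1 f \* g \+ f \* derive1 g) x.
Proof.
move=> sf sg ax; rewrite /= !derive1E -[f \* g]/(f * g) deriveM;
  try exact: smooth_on_derivable.
by rewrite addrC /GRing.scale /= mulrC [f x * _]mulrC.
Qed.

Lemma smooth_onM {f g : R -> R} : smooth_on f -> smooth_on g -> smooth_on (f \* g).
Proof.
move=> sf sg k; elim/ltn_ind: k f g sf sg => -[|k] IHk f g sf sg x ax.
  rewrite derive1n0 -[f \* g]/(f * g).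
  exact: derivableM (smooth_on_derivable sf ax) (smooth_on_derivable sg ax).
have sD1 := smooth_on_derive1 sf; have sD2 := smooth_on_derive1 sg.
apply: (derivable_eq_on (f := derive1n k (derive1 f \* g) \+ derive1n k (f \* derive1 g))) => //.
  move=> y ay; rewrite derive1Sn /= -derive1nD_on //.
  - by apply: derive1n_eq_on => // z az; rewrite derive1M_on.
  - by move=> j z jk; apply: IHk => //; apply: ltn_trans jk _.
  - by move=> j z jk; apply: IHk => //; apply: ltn_trans jk _.
exact: derivableD (IHk k (ltnSn k) _ _ sD1 sg x ax) (IHk k (ltnSn k) _ _ sf sD2 x ax).
Qed.

Lemma derive1n_horner (p : {poly R}) k : derive1n k (horner p) = horner p^`(k).
Proof.
elim: k => [|k IHk]; first by rewrite derive1n0 derivn0.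
rewrite derive1nS IHk derivnS; apply/funext => x.
by rewrite derive1E; apply: derive_val.
Qed.

Lemma smooth_on_horner (p : {poly R}) : smooth_on (horner p).
Proof. by move=> k x _; rewrite derive1n_horner; case: (is_derive_poly p^`(k) x). Qed.

Lemma smooth_on_sum {I : Type} (s : seq I) (F : I -> R -> R) :
  (forall i, smooth_on (F i)) -> smooth_on (fun x => \sum_(i <- s) F i x).
Proof.
move=> sF; elim: s => [|i s IHs].
  apply: (smooth_on_eq (f := horner 0)) => [y _|]; last exact: smooth_on_horner.
  by rewrite big_nil horner0.
apply: (smooth_on_eq (f := F i \+ fun x => \sum_(j <- s) F j x)); last exact: smooth_onD.
by move=> y _; rewrite big_cons.
Qed.

End SmoothOn.

Section ShiftedPower.
Context {R : realType}.

Definition spow (c e x : R) := (x + c) `^ e.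

Lemma spow_gt0 {c x : R} (e : R) : 0 < x + c -> 0 < spow c e x.
Proof. by move=> h; rewrite /spow powR_gt0. Qed.

Lemma spowD {c x : R} (e f : R) : 0 < x + c ->
  spow c (e + f) x = spow c e x * spow c f x.
Proof. by move=> h; rewrite /spow powRD //; apply/implyP => _; rewrite gt_eqF. Qed.

Lemma spowNK {c x : R} (e : R) : 0 < x + c -> spow c (- e) x * spow c e x = 1.
Proof. by move=> h; rewrite -spowD // addNr /spow powRr0. Qed.

Lemma spowB1 {c x : R} (e : R) : 0 < x + c -> spow c e x = spow c (e - 1) x * (x + c).
Proof. by move=> h; rewrite -[x + c in RHS]powRr1 ?ltW // -spowD // subrK. Qed.

Lemma spowS2 {c x : R} (e : R) : 0 < x + c ->
  spow c (e + 1) x = spow c (e - 1) x * (x + c) ^+ 2.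
Proof. by move=> h; rewrite (spowB1 (e + 1) h) addrK (spowB1 e h) -mulrA. Qed.

Lemma is_derive_spow {c x : R} (e : R) : 0 < x + c ->
  is_derive x 1 (spow c e) (e * spow c (e - 1) x).
Proof.
move=> h; rewrite -[e * _]mulr1.
have shift_c : is_derive x 1 (fun y : R => y + c) 1 := is_derive_shift x 1 c.
exact: (@is_derive1_comp R (fun y : R => y `^ e) _ x _ _ (is_derive1_powR e h) shift_c).
Qed.

Lemma derive1n_spow {a c x : R} (e : R) k : - c <= a -> a < x ->
  derive1n k (spow c e) x = (\prod_(i < k) (e - i%:R)) * spow c (e - k%:R) x.
Proof.
move=> ca; have pos y : a < y -> 0 < y + c by move=> ay; lra.
elim: k x => [|k IHk] x ax; first by rewrite big_ord0 mul1r subr0.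
rewrite derive1nS (derive1_eq_on (g := fun y => (\prod_(i < k) (e - i%:R)) * spow c (e - k%:R) y) ax);
  last exact: IHk.
rewrite derive1Ml; last by case: (is_derive_spow (e - k%:R) (pos x ax)).
rewrite derive1E; have [_ ->] := is_derive_spow (e - k%:R) (pos x ax).
by rewrite big_ord_recr /= -addn1 natrD opprD addrA mulrA.
Qed.

Lemma smooth_on_spow {a c : R} (e : R) : - c <= a -> smooth_on (a := a) (spow c e).
Proof.
move=> ca k x ax; have pos y : a < y -> 0 < y + c by move=> ay; lra.
apply: (derivable_eq_on (f := fun y => (\prod_(i < k) (e - i%:R)) * spow c (e - k%:R) y) ax).
  by move=> y ay; rewrite (derive1n_spow _ _ ca).
by apply: derivableZ; case: (is_derive_spow (e - k%:R) (pos x ax)).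
Qed.

End ShiftedPower.

Section ZeroCounting.
Context {R : realType} {a : R}.

Definition zeros_lt (f : R -> R) (N : nat) := forall (s : seq R) (m : R -> nat),
  uniq s -> (forall x, x \in s -> a < x /\ zero_mult_ge f x (m x)) ->
  (\sum_(x <- s) m x < N)%N.

Lemma zeros_lt_eq_on {f g : R -> R} {N : nat} :
  (forall y, a < y -> f y = g y) -> zeros_lt f N -> zeros_lt g N.
Proof.
move=> fg zf s m us hs; apply: zf => // x xs; have [ax zx] := hs x xs.
by split=> // i im; rewrite (derive1n_eq_on _ ax fg); apply: zx.
Qed.

Lemma zero_mult_ge_derive1 {f : R -> R} {x : R} {m : nat} :
  zero_mult_ge f x m.+1 -> zero_mult_ge (derive1 f) x m.
Proof. by move=> zf i im; rewrite -derive1Sn; apply: zf. Qed.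

Lemma zero_mult_ge_mull {w f : R -> R} {x : R} {m : nat} :
  smooth_on (a := a) w -> smooth_on (a := a) f ->
  a < x -> zero_mult_ge f x m -> zero_mult_ge (w \* f) x m.
Proof.
elim: m w f => [//|m IHm] w f sw sf ax zf [|i] im.
  by move: (zf 0%N isT); rewrite !derive1n0 /= => ->; rewrite mulr0.
have sw' := smooth_on_derive1 sw; have sf' := smooth_on_derive1 sf.
rewrite derive1Sn (derive1n_eq_on (g := (derive1 w \* f) \+ (w \* derive1 f)) i ax);
  last by move=> y ay; rewrite (derive1M_on sw sf ay).
rewrite (derive1nD_on _ _ ax); last 2 first.
- by move=> j y _; apply: smooth_onM sw' sf j y.
- by move=> j y _; apply: smooth_onM sw sf' j y.
rewrite (IHm _ _ sw' sf) ?(IHm _ _ sw sf') ?addr0 //.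
- exact: zero_mult_ge_derive1.
- by move=> j jm; apply: zf; apply: ltnW.
Qed.

Lemma zeros_lt_mull {w f : R -> R} {N : nat} :
  smooth_on (a := a) w -> smooth_on (a := a) f ->
  zeros_lt (w \* f) N -> zeros_lt f N.
Proof.
move=> sw sf zf s m us hs; apply: zf => // x xs; have [ax zx] := hs x xs.
by split=> //; apply: zero_mult_ge_mull.
Qed.

Lemma rolle_on {f : R -> R} {x y : R} : smooth_on (a := a) f -> a < x -> x < y ->
  f x = 0 -> f y = 0 -> exists2 z, x < z < y & derive1 f z = 0.
Proof.
move=> sf ax xy fx fy.
have df z : x <= z -> derivable f z 1.
  by move=> xz; apply: smooth_on_derivable sf _; apply: lt_le_trans ax xz.
have [z] : exists2 z, z \in `]x, y[ & is_derive z 1 f 0.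
  apply: Rolle => //; last by rewrite fx fy.
  - by move=> z; rewrite in_itv /= => /andP [/ltW /df].
  - apply: derivable_within_continuous => z.
    by rewrite in_itv /= => /andP [/df].
by rewrite in_itv /= => xzy [_ dz]; exists z => //; rewrite derive1E.
Qed.

Lemma rolle_sorted {f : R -> R} {m : R -> nat} {L : seq R} {x : R} :
  smooth_on (a := a) f ->
  sorted <%R (x :: L) ->
  (forall z, z \in x :: L -> [/\ a < z, zero_mult_ge f z (m z) & (0 < m z)%N]) ->
  exists t (m' : R -> nat), [/\ uniq t,
    (forall z, z \in t -> a < z /\ zero_mult_ge (derive1 f) z (m' z)),
    (forall z, z \in t -> x <= z) &
    (\sum_(z <- t) m' z).+1 = \sum_(z <- x :: L) m z].
Proof.
move=> sf; elim: L x => [|y L IHL] x.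
  move=> _ /(_ x (mem_head _ _)) [ax zx mx].
  exists [:: x], (fun z => (m z).-1); split => //.
  - move=> z; rewrite inE => /eqP ->; split => //.
    by apply: zero_mult_ge_derive1; rewrite prednK.
  - by move=> z; rewrite inE => /eqP ->.
  - by rewrite !big_seq1 prednK.
rewrite /= => /andP [xy syL] hs.
have hs_tail z : z \in y :: L -> [/\ a < z, zero_mult_ge f z (m z) & (0 < m z)%N].
  by move=> zL; apply: hs; rewrite inE zL orbT.
have [t [m' [ut ht tge st]]] := IHL y syL hs_tail.
have [ax zx mx] := hs x (mem_head _ _).
have [ay zy my] := hs_tail y (mem_head _ _).
have [xi /andP [xxi xiy] dxi] := rolle_on sf ax xy (zx 0%N mx) (zy 0%N my).
have notin_t z : z < y -> z \notin t by move=> zy'; apply/negP => /tge; rewrite leNgt zy'.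
have xt := notin_t x xy; have xit := notin_t xi xiy.
pose m'' := [eta m' with x |-> (m x).-1, xi |-> 1%N].
have m''_t z : z \in t -> m'' z = m' z.
  move=> zt /=; have z_x : z != x by apply: contraNneq xt => <-.
  have z_xi : z != xi by apply: contraNneq xit => <-.
  by rewrite !ifN_eq.
exists [:: x, xi & t], m''; split.
- by rewrite /= !inE negb_or (lt_eqF xxi) xt xit ut.
- move=> z; rewrite !inE => /orP [/eqP ->|/orP [/eqP ->|zt]].
  + by rewrite /= eqxx; split=> //; apply: zero_mult_ge_derive1; rewrite prednK.
  + rewrite /= eqxx (gt_eqF xxi); split; first exact: lt_trans ax xxi.
    by case=> // _; rewrite derive1n0.
  + by rewrite m''_t //; apply: ht.
- move=> z; rewrite !inE => /orP [/eqP ->|/orP [/eqP ->|/tge]] //.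
  + exact: ltW.
  + exact/le_trans/ltW.
rewrite [RHS]big_cons -st !big_cons (eq_big_seq _ m''_t) /= eqxx (gt_eqF xxi) eqxx.
by rewrite -[in RHS](prednK mx) addSn.
Qed.

Lemma zeros_lt_derive1 {f : R -> R} {N : nat} : smooth_on (a := a) f ->
  zeros_lt (derive1 f) N -> zeros_lt f N.+1.
Proof.
move=> sf zf s m us hs.
rewrite (bigID (fun z => (0 < m z)%N)) /= addnC big1 ?add0n; last by move=> z; case: (m z).
rewrite -big_filter -(perm_big _ (permEl (perm_sort <=%R _))).
set s' := sort _ _.
have ss' : sorted <%R s'.
  rewrite lt_sorted_uniq_le sort_uniq filter_uniq //=.
  exact/sort_sorted/le_total.
have hs' z : z \in s' -> [/\ a < z, zero_mult_ge f z (m z) & (0 < m z)%N].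
  by rewrite mem_sort mem_filter => /andP [mz /hs [az zz]].
case: s' ss' hs' => [|x L] ss' hs'; first by rewrite big_nil.
have [t [m' [ut ht _ <-]]] := rolle_sorted sf ss' hs'.
by rewrite ltnS; apply: zf.
Qed.

Lemma constant_on {f : R -> R} {x y : R} : smooth_on (a := a) f ->
  (forall z, a < z -> derive1 f z = 0) -> a < x -> a < y -> f x = f y.
Proof.
move=> sf f'0; wlog xy : x y / x <= y.
  move=> H ax ay; case: (leP x y) => [xy|/ltW yx]; first exact: H.
  by apply/esym/H.
move=> ax ay; have ax' z : x <= z -> a < z by apply: lt_le_trans.
have [z /[!in_itv] /= /andP [/ax' az _]] :
    exists2 z, z \in `[x, y] & f y - f x = derive1 f z * (y - x).
  apply: MVT_segment => //.
  - move=> z /[!in_itv] /= /andP [/ltW /ax' az _].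
    by rewrite derive1E; apply: derivableP; apply: smooth_on_derivable sf az.
  - apply: derivable_within_continuous => z /[!in_itv] /= /andP [/ax' az _].
    exact: smooth_on_derivable sf az.
by move/eqP; rewrite f'0 // mul0r subr_eq0 => /eqP.
Qed.

Lemma zeros_lt_derive_chain {S : nat} {E : nat -> R -> R} {w : R -> R} {N : nat} :
  (forall k, smooth_on (a := a) (E k)) -> smooth_on (a := a) w -> (forall x, a < x -> w x != 0) ->
  (forall k x, a < x -> E k.+1 x = w x * derive1 (E k) x) ->
  (exists x, a < x /\ E 0%N x != 0) ->
  ((exists x, a < x /\ E S x != 0) -> zeros_lt (E S) N) -> zeros_lt (E 0%N) (N + S).
Proof.
elim: S E => [|S IHS] E sE sw w0 ES nz zS; first by rewrite addn0; apply: zS.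
have [[x [ax E1x]]|E1_0] := pselect (exists x, a < x /\ E 1%N x != 0).
  rewrite addnS; apply: zeros_lt_derive1 (sE 0%N) _.
  apply: (zeros_lt_mull sw (smooth_on_derive1 (sE 0%N))).
  apply: (zeros_lt_eq_on (f := E 1%N)) => [y ay|]; first exact: ES.
  apply: (IHS (fun k => E k.+1) _ sw w0 _ _ zS).
  - by move=> k; apply: sE.
  - by move=> k; apply: ES.
  - by exists x.
have E0'_0 x : a < x -> derive1 (E 0%N) x = 0.
  move=> ax; apply: contra_notP E1_0 => /eqP E0'x; exists x; split=> //.
  by rewrite ES // mulf_neq0 ?w0.
have [x0 [ax0 E0x0]] := nz.
move=> s m us hs; rewrite big1_seq ?addnS // => z /andP [_ /hs [az]].
case: (m z) => // k /(_ 0%N isT); rewrite derive1n0 (constant_on (sE 0%N) E0'_0 az ax0).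
by move/eqP: E0x0.
Qed.

End ZeroCounting.

Section DerivativePolynomials.
Context {R : comNzRingType}.

Definition deriv_term1 (c e : R) (Q : {poly R}) : {poly R} :=
  Q^`() * ('X + c%:P) + e *: Q.

Definition deriv_term2 (c1 c2 e1 e2 : R) (Q : {poly R}) : {poly R} :=
  Q^`() * ('X + c1%:P) * ('X + c2%:P) +
  Q * ((e1 + e2) *: 'X + (e1 * c2 + e2 * c1)%:P).

Lemma coef_mulXaddC (p : {poly R}) c k :
  (p * ('X + c%:P))`_k = (if k is i.+1 then p`_i else 0) + c * p`_k.
Proof. by rewrite mulrDr coefD coefMX coefMC mulrC; case: k. Qed.

Lemma coef_mulZXaddC (p : {poly R}) u v k :
  (p * (u *: 'X + v%:P))`_k = (if k is i.+1 then u * p`_i else 0) + v * p`_k.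
Proof.
rewrite mulrDr coefD -scalerAr coefZ coefMX coefMC [v * _]mulrC.
by case: k => [|k] /=; rewrite ?mulr0.
Qed.

Lemma size_deriv_term1 {Q : {poly R}} (c e : R) {n : nat} :
  (size Q <= n)%N -> (size (deriv_term1 c e Q) <= n)%N.
Proof.
move/leq_sizeP => Qz; apply/leq_sizeP => k kn.
rewrite /deriv_term1 coefD coef_mulXaddC coefZ.
case: k kn => [|i] kn /=; rewrite !coef_deriv.
  by rewrite (Qz 0%N) ?(Qz 1%N) // ?mul0rn ?mulr0 ?addr0 //; lia.
by rewrite (Qz i.+1) ?(Qz i.+2) // ?mul0rn ?mulr0 ?addr0 //; lia.
Qed.

(* The exponent [- n] cancels the coefficient of degree [n]. *)
Lemma size_deriv_term1_lead {Q : {poly R}} (c : R) {n : nat} :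
  (size Q <= n.+1)%N -> (size (deriv_term1 c (- n%:R) Q) <= n)%N.
Proof.
move/leq_sizeP => Qz; apply/leq_sizeP => k kn.
rewrite /deriv_term1 coefD coef_mulXaddC coefZ.
case: k kn => [|i] kn /=; rewrite !coef_deriv.
  have -> : n = 0%N by lia.
  by rewrite (Qz 1%N) //; rewrite !(mul0rn, mulr0, addr0, add0r, oppr0, mul0r).
rewrite (Qz i.+2) ?mul0rn ?mulr0 ?addr0; last lia.
have [-> | ne] := eqVneq i.+1 n; first by rewrite -mulr_natl; ring.
by rewrite (Qz i.+1) ?mul0rn ?mulr0 ?addr0 //; lia.
Qed.

Lemma size_deriv_term2 {Q : {poly R}} (c1 c2 e1 e2 : R) {n : nat} : (size Q <= n)%N ->
  e1 + e2 = 1 - n%:R -> (size (deriv_term2 c1 c2 e1 e2 Q) <= n)%N.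
Proof.
case: n => [|n] sQ he.
  by move: sQ; rewrite size_poly_leq0 => /eqP ->; rewrite /deriv_term2 deriv0 !mul0r add0r size_poly0.
move/leq_sizeP: sQ => Qz; apply/leq_sizeP => -[//|i] kn.
rewrite /deriv_term2 coefD coef_mulXaddC coef_mulZXaddC /= !coef_mulXaddC.
case: i kn => [|l] kn /=; rewrite !coef_deriv.
  have n0 : n = 0%N by lia.
  rewrite (Qz 1%N) ?(Qz 2%N); try lia.
  by rewrite he n0 !(mul0rn, mulr0, addr0, add0r, subrr, mul0r).
rewrite (Qz l.+2) ?(Qz l.+3); try lia.
rewrite !(mul0rn, mulr0, addr0, add0r) he.
have [-> | ne] := eqVneq l.+1 n; first by rewrite -mulr_natl -natr1; ring.
by rewrite (Qz l.+1) ?mul0rn ?mulr0 ?addr0 //; lia.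
Qed.

End DerivativePolynomials.

Section Terms.
Context {R : realType}.

Lemma is_derive_fun_sum {n : nat} {g : 'I_n -> R -> R} {dg : 'I_n -> R} {x : R} :
  (forall j, is_derive x 1 (g j) (dg j)) ->
  is_derive x 1 (fun y => \sum_(j < n) g j y) (\sum_(j < n) dg j).
Proof. by move=> h; rewrite -fct_sumE; exact: is_derive_sum. Qed.

Lemma is_derive_term1 (Q : {poly R}) {c x : R} (e : R) : 0 < x + c ->
  is_derive x 1 (fun y => Q.[y] * spow c e y)
    ((deriv_term1 c e Q).[x] * spow c (e - 1) x).
Proof.
move=> h; have := is_deriveM (is_derive_poly Q x) (is_derive_spow e h).
congr is_derive; rewrite /GRing.scale /= (spowB1 e h) /deriv_term1.
by rewrite !(hornerD, hornerM, hornerZ, hornerX, hornerC); ring.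
Qed.

Lemma is_derive_term2 (Q : {poly R}) {c1 c2 x : R} (e1 e2 : R) :
  0 < x + c1 -> 0 < x + c2 ->
  is_derive x 1 (fun y => Q.[y] * spow c1 e1 y * spow c2 e2 y)
    ((deriv_term2 c1 c2 e1 e2 Q).[x] * spow c1 (e1 - 1) x * spow c2 (e2 - 1) x).
Proof.
move=> h1 h2.
have := is_deriveM (is_deriveM (is_derive_poly Q x) (is_derive_spow e1 h1)) (is_derive_spow e2 h2).
congr is_derive; rewrite /GRing.scale /= -[(_ * spow c1 e1) x]/(Q.[x] * spow c1 e1 x).
rewrite (spowB1 e1 h1) (spowB1 e2 h2) /deriv_term2.
by rewrite !(hornerD, hornerM, hornerZ, hornerX, hornerC); ring.
Qed.

Lemma smooth_on_term1 {a c : R} (Q : {poly R}) (e : R) : - c <= a ->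
  smooth_on (a := a) (fun y => Q.[y] * spow c e y).
Proof.
move=> ca; apply: (smooth_on_eq _ (smooth_onM (smooth_on_horner Q) (smooth_on_spow e ca))).
by move=> y _.
Qed.

Lemma smooth_on_term2 {a c1 c2 : R} (Q : {poly R}) (e1 e2 : R) :
  - c1 <= a -> - c2 <= a ->
  smooth_on (a := a) (fun y => Q.[y] * spow c1 e1 y * spow c2 e2 y).
Proof.
move=> ca1 ca2.
apply: (smooth_on_eq _ (smooth_onM (smooth_on_term1 Q e1 ca1) (smooth_on_spow e2 ca2))).
by move=> y _.
Qed.

End Terms.

Definition shifted_sum {R : realType} {K : nat} (b : R) (c : 'I_K -> R)
    (P : 'I_K -> {poly R}) (x : R) :=
  \sum_(j < K) (P j).[x] * spow (c j) (- b) x.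

Lemma smooth_on_shifted_sum {R : realType} {a : R} {K : nat} (b : R) (c : 'I_K -> R)
    (P : 'I_K -> {poly R}) :
  (forall j, - c j <= a) -> smooth_on (a := a) (shifted_sum b c P).
Proof. by move=> ca; apply: smooth_on_sum => j; apply: smooth_on_term1 (ca j). Qed.

Section EliminateLastTerm.
Context {R : realType} {a : R} {K S : nat} {b : R}.
Context {c : 'I_K.+1 -> R} {P : 'I_K.+1 -> {poly R}}.
Hypotheses (ca : forall j, - c j <= a) (size_P : forall j, (size (P j) <= S)%N).
Hypothesis IH : forall (c' : 'I_K -> R) (Q : 'I_K -> {poly R}),
  (forall j, - c' j <= a) -> (forall j, (size (Q j) <= S)%N) ->
  (exists x, a < x /\ shifted_sum (b + S%:R) c' Q x != 0) ->
  zeros_lt (a := a) (shifted_sum (b + S%:R) c' Q) (K * S).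

Let cK := c ord_max.
Let c' j := c (widen_ord (leqnSn K) j).
Let e1 m : R := - b - m%:R.
Let e2 m : R := b - S%:R + 1 + m%:R.
Let eK m : R := 1 - S%:R + m%:R.
Let Q m j := iteri m (fun i => deriv_term2 (c' j) cK (e1 i) (e2 i)) (P (widen_ord (leqnSn K) j)).
Let QK m := iteri m (fun i => deriv_term1 cK (eK i)) (P ord_max).
Let Esum m x := \sum_(j < K) (Q m j).[x] * spow (c' j) (e1 m) x * spow cK (e2 m) x.
Let Elast m x := (QK m).[x] * spow cK (eK m) x.
Let E m := Esum m \+ Elast m.

Let pos j x : a < x -> 0 < x + c j.
Proof. by move=> ax; have := ca j; lra. Qed.

Lemma size_iterated_term2 m j : (size (Q m j) <= S)%N.
Proof.
elim: m => [|m IHm]; first exact: size_P.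
by apply: size_deriv_term2 IHm _; rewrite /e1 /e2; ring.
Qed.

Lemma size_iterated_last_term m : (m <= S)%N -> (size (QK m) <= S - m)%N.
Proof.
elim: m => [|m IHm] mS; first by rewrite subn0; apply: size_P.
have -> : QK m.+1 = deriv_term1 cK (- (S - m.+1)%:R) (QK m).
  by rewrite /QK /= /eK natrB // -addn1 natrD; congr deriv_term1; ring.
by apply: size_deriv_term1_lead; rewrite subnSK // IHm // ltnW.
Qed.

Lemma iterated_last_term_vanishes : QK S = 0.
Proof. by apply/eqP; rewrite -size_poly_leq0 -(subnn S) size_iterated_last_term. Qed.

Lemma smooth_on_E m : smooth_on (a := a) (E m).
Proof.
apply: smooth_onD; last exact: smooth_on_term1 _ _ (ca ord_max).
by apply: smooth_on_sum => j; apply: smooth_on_term2 (ca _) (ca ord_max).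
Qed.

Lemma E_succ m x : a < x -> E m.+1 x = (x + cK) ^+ 2 * derive1 (E m) x.
Proof.
move=> ax; rewrite derive1E.
have [_ ->] := is_deriveD
  (is_derive_fun_sum (fun j => is_derive_term2 (Q m j) (e1 m) (e2 m)
     (pos (widen_ord (leqnSn K) j) _ ax) (pos ord_max _ ax)))
  (is_derive_term1 (QK m) (eK m) (pos ord_max _ ax)).
have e1S : e1 m.+1 = e1 m - 1 by rewrite /e1 /= -natr1; ring.
have e2S : e2 m.+1 = e2 m + 1 by rewrite /e2 /= -natr1; ring.
have eKS : eK m.+1 = eK m + 1 by rewrite /eK /= -natr1; ring.
have hK := pos ord_max _ ax.
rewrite mulrDr big_distrr /=; congr (_ + _).
  apply: eq_bigr => j _; rewrite e1S e2S (spowS2 _ hK).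
  by rewrite -[Q m.+1 j]/(deriv_term2 (c' j) cK (e1 m) (e2 m) (Q m j)) /cK /c'; ring.
rewrite /Elast eKS (spowS2 _ hK).
by rewrite -[QK m.+1]/(deriv_term1 cK (eK m) (QK m)) /cK; ring.
Qed.

Lemma E_0 x : a < x -> E 0 x = spow cK (b - S%:R + 1) x * shifted_sum b c P x.
Proof.
move=> ax; rewrite /= /shifted_sum big_ord_recr /= mulrDr big_distrr /=; congr (_ + _).
  by apply: eq_bigr => j _; rewrite /e1 /e2 /cK /c' /= subr0 addr0; ring.
rewrite /Elast -[QK 0]/(P ord_max).
have -> : eK 0 = b - S%:R + 1 + - b by rewrite /eK /= addr0; ring.
by rewrite (spowD _ _ (pos ord_max _ ax)) /cK; ring.
Qed.

Lemma E_S x : E S x = spow cK (b + 1) x * shifted_sum (b + S%:R) c' (Q S) x.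
Proof.
rewrite /E /= /Elast /= iterated_last_term_vanishes horner0 mul0r addr0 /shifted_sum big_distrr /=.
apply: eq_bigr => j _.
have -> : e1 S = - (b + S%:R) by rewrite /e1 opprD.
have -> : e2 S = b + 1 by rewrite /e2; ring.
by rewrite /cK /c'; ring.
Qed.

Lemma zeros_lt_shifted_sum_step : (exists x, a < x /\ shifted_sum b c P x != 0) ->
  zeros_lt (a := a) (shifted_sum b c P) (K.+1 * S).
Proof.
move=> [x0 [ax0 nz0]]; have hK x : a < x -> 0 < x + cK := pos ord_max x.
have sw : smooth_on (a := a) (fun x => (x + cK) ^+ 2).
  apply: (smooth_on_eq (f := horner (('X + cK%:P) ^+ 2))); last exact: smooth_on_horner.
  by move=> y _; rewrite horner_exp hornerD hornerX hornerC.
have w_neq0 x : a < x -> (x + cK) ^+ 2 != 0 by move/hK => ?; rewrite expf_neq0 // gt_eqF.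
have E0_neq0 : exists x, a < x /\ E 0 x != 0.
  by exists x0; rewrite E_0 // mulf_neq0 // gt_eqF // spow_gt0 // hK.
have ES_zeros : (exists x, a < x /\ E S x != 0) -> zeros_lt (a := a) (E S) (K * S).
  move=> [x1 [ax1]]; rewrite E_S mulf_eq0 negb_or => /andP [_ nz1].
  have := IH c' (Q S) (fun j => ca _) (size_iterated_term2 S) (ex_intro _ x1 (conj ax1 nz1)).
  move/(zeros_lt_eq_on (g := spow cK (- (b + 1)) \* E S)) => zE.
  apply: (zeros_lt_mull (smooth_on_spow _ (ca ord_max)) (smooth_on_E S)); apply: zE.
  by move=> y ay; rewrite /= E_S mulrA spowNK ?mul1r // hK.
have := zeros_lt_derive_chain smooth_on_E sw w_neq0 E_succ E0_neq0 ES_zeros.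
move/(zeros_lt_eq_on (g := spow cK (b - S%:R + 1) \* shifted_sum b c P)) => zE.
rewrite mulSn addnC.
apply: (zeros_lt_mull (smooth_on_spow _ (ca ord_max)) (smooth_on_shifted_sum _ _ _ ca)).
by apply: zE => y ay; rewrite E_0.
Qed.

End EliminateLastTerm.

Lemma zeros_lt_shifted_sum {R : realType} {a : R} {K S : nat} (b : R) (c : 'I_K -> R)
    (P : 'I_K -> {poly R}) :
  (forall j, - c j <= a) -> (forall j, (size (P j) <= S)%N) ->
  (exists x, a < x /\ shifted_sum b c P x != 0) ->
  zeros_lt (a := a) (shifted_sum b c P) (K * S).
Proof.
elim: K b c P => [|K IHK] b c P ca sP [x [ax nz]].
  by move: nz; rewrite /shifted_sum big_ord0 eqxx.
apply: (zeros_lt_shifted_sum_step ca sP); last by exists x.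
by move=> c' Q ca' sQ; apply: IHK.
Qed.

Section DifferentiatePolynomialPart.
Context {R : realType} {a : R} {K S : nat} (b : R) (P0 : {poly R}).
Context (c : 'I_K -> R) (P : 'I_K -> {poly R}).
Hypotheses (ca : forall j, - c j <= a) (size_P : forall j, (size (P j) <= S)%N).

Let Rs m j := iteri m (fun i => deriv_term1 (c j) (- (b + i%:R))) (P j).
Let G m := horner P0^`(m) \+ shifted_sum (b + m%:R) c (Rs m).

Lemma size_iterated_term1 m j : (size (Rs m j) <= S)%N.
Proof. by elim: m => [|m IHm]; [apply: size_P | apply: size_deriv_term1]. Qed.

Lemma smooth_on_G m : smooth_on (a := a) (G m).
Proof. exact: smooth_onD (smooth_on_horner _) (smooth_on_shifted_sum _ _ _ ca). Qed.

Lemma G_succ m x : a < x -> G m.+1 x = derive1 (G m) x.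
Proof.
move=> ax; have pos j : 0 < x + c j by have := ca j; lra.
rewrite derive1E.
have [_ ->] := is_deriveD (is_derive_poly P0^`(m) x)
  (is_derive_fun_sum (fun j => is_derive_term1 (Rs m j) (- (b + m%:R)) (pos j))).
rewrite /G /=; congr (_ + _); apply: eq_bigr => j _.
by have -> : - (b + m.+1%:R) = - (b + m%:R) - 1 by rewrite -natr1; ring.
Qed.

Lemma G_size x : G (size P0) x = shifted_sum (b + (size P0)%:R) c (Rs (size P0)) x.
Proof. by rewrite /G /= derivn_poly0 // horner0 add0r. Qed.

Lemma zeros_lt_poly_add_shifted_sum :
  (exists x, a < x /\ P0.[x] + shifted_sum b c P x != 0) ->
  zeros_lt (a := a) (fun x => P0.[x] + shifted_sum b c P x) (K * S + size P0).
Proof.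
have G0 x : a < x -> G 0 x = P0.[x] + shifted_sum b c P x by rewrite /G /= addr0.
move=> [x0 [ax0 nz0]].
have sw : smooth_on (a := a) (fun=> 1) by apply: (smooth_on_eq (f := horner 1)) => [y _|];
  [rewrite hornerC | apply: smooth_on_horner].
apply: (zeros_lt_eq_on G0).
have G_rec m x : a < x -> G m.+1 x = 1 * derive1 (G m) x by rewrite mul1r; apply: G_succ.
apply: (zeros_lt_derive_chain smooth_on_G sw (fun _ _ => oner_neq0 R) G_rec).
  by exists x0; rewrite G0.
move=> [x1 [ax1]]; rewrite G_size => nz1.
apply: (zeros_lt_eq_on (f := shifted_sum (b + (size P0)%:R) c (Rs (size P0)))).
  by move=> y _; rewrite G_size.
apply: (zeros_lt_shifted_sum _ _ _ ca (size_iterated_term1 _)).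
by exists x1.
Qed.

End DifferentiatePolynomialPart.

Theorem theorem1p2 (R : realType) (K : nat) (hK : (1 <= K)%N)
  (P0 : {poly R}) (P : 'I_K -> {poly R}) (c : 'I_K -> R) :
  (exists x, in_dom c x /\ Fsqrt P0 P c x != 0) ->
  zeros_with_mult_le (Fsqrt P0 P c) (in_dom c)
    ((K * \max_(j < K) size (P j) + size P0)%N%:Z - 1).
Proof.
move=> [x0 [dx0 nz0]].
pose a := \big[Order.max/ - c (Ordinal hK)]_(j < K) - c j.
have ca j : - c j <= a by apply: le_bigmax.
have dom x : in_dom c x -> a < x by move=> dx; apply: bigmax_lt => // j _; apply: dx.
have F_eq x : a < x -> P0.[x] + shifted_sum (2^-1) c P x = Fsqrt P0 P c x.
  move=> ax; congr (_ + _); apply: eq_bigr => j _.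
  by rewrite /spow powRN powR12_sqrt // ltW //; have := ca j; lra.
have nz : exists x, a < x /\ P0.[x] + shifted_sum (2^-1) c P x != 0.
  by exists x0; rewrite F_eq ?dom.
have size_P j : (size (P j) <= \max_(i < K) size (P i))%N by apply: leq_bigmax.
have Z := zeros_lt_poly_add_shifted_sum (2^-1) P0 c P ca size_P nz.
move=> s m us hs.
have hs' x : x \in s -> a < x /\ zero_mult_ge (Fsqrt P0 P c) x (m x) by move=> /hs [/dom].
have := zeros_lt_eq_on F_eq Z s m us hs'; lia.
Qed.
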